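(* Let $K$ be a field, $\Lambda=(KQ/\langle I\rangle,|\cdot|)$ a graded pinched gentle algebra, $(\alpha,\beta)$ an acyclic graded Kronecker of $\Lambda$ with source $1$ and target $2$, $\mu\in K^*$, and $B=(P_2[|\alpha|]\oplus P_1[1],\partial=\begin{pmatrix}0&\alpha+\mu\beta\\0&0\end{pmatrix})\in\mathcal{P}(\Lambda)^{pre-tr}$. Let $\mathcal{A}$ be the full DG subcategory of $\mathcal{P}(\Lambda)^{pre-tr}$ on $Q_0\cup\{B\}$. Then for all $i\in Q_0\setminus\{1,2\}$, $H^*\mathrm{Hom}_{\mathcal{A}}(P_i,B)\simeq0\simeq H^*\mathrm{Hom}_{\mathcal{A}}(B,P_i)$.
   Context: Paths in $Q$ are composed right to left; $e_a$ trivial path, $P_a=e_a\Lambda$. Graded pinched gentle: $Q_1=Q_1^g\sqcup Q_1^p$, $I=I^g\sqcup I^p$, $(Q^g,\langle I^g\rangle)$ gentle (each vertex at most two incoming/outgoing arrows; $I^g$ paths of length two with, for each arrow $\alpha$, at most one arrow $\beta$ with $\alpha\beta$ a path in $I^g$, at most one $\gamma$ with $\gamma\alpha$ in $I^g$, at most one $\beta'$ with $\alpha\beta'$ a path not in $I^g$, at most one $\gamma'$ with $\gamma'\alpha$ not in $I^g$), $Q_1^p$ degree-zero loops at distinct vertices, and for each $v$ with loop $\gamma_v$, arrows $\alpha_v^\pm,\beta_v^\pm$ of $Q^g$ at $v$ with $\beta_v^+\alpha_v^-,\alpha_v^+\beta_v^-\in I^g$ give $I^p=\{\beta_v^+(\gamma_v+e_v),(\gamma_v+e_v)\beta_v^-,\alpha_v^+(\gamma_v-e_v),(\gamma_v-e_v)\alpha_v^-\}$.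 Graded Kronecker: arrows $\alpha,\beta$ of $Q^g$, not loops, common source $1$, common target $2$, $|\alpha|=|\beta|$, no loop of $Q_1^p$ at $1$ or $2$; acyclic: $\alpha,\beta$ not on an oriented cycle of $(Q^g,I^g)$. $\mathcal{P}(\Lambda)$ is the DG category with objects $Q_0$ (vertex $i$ written $P_i$), $\mathrm{Hom}(i,j)=e_j\Lambda e_i$ graded, zero differential. $\mathcal{P}(\Lambda)^{pre-tr}$ (one-sided twisted complexes): objects $(\bigoplus_iC_i[r_i],\partial)$ with $\partial$ strictly upper triangular, entries $\partial_{ij}\in\mathrm{Hom}(C_j,C_i)$ of degree $r_i-r_j+1$, $d_{naive}\partial+\partial^2=0$; morphisms are matrices of morphisms, an entry $b:C_l\to C'_k$ having degree $|b|+r_l-r'_k$; composition by matrix multiplication; $df=d_{naive}f+\partial'f-(-1)^lf\partial$ for $f$ of degree $l$. Each $P_i$ is the twisted complex $(P_i[0],0)$. *)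

From HB Require Import structures.
From mathcomp Require Import all_boot all_order all_algebra.
Set Implicit Arguments. Unset Strict Implicit. Unset Printing Implicit Defensive.
Import GRing.Theory.
Local Open Scope ring_scope.

Record quiver := Quiver {
  vert : finType; arr : finType; src : arr -> vert; tgt : arr -> vert }.

Section PathAlgebra.
Variable Q : quiver.

(** A path is a start vertex together with its arrows in order of traversal
    (first traversed arrow first).  The trivial path e_v is (v, [::]). *)
Definition qpath := (vert Q * seq (arr Q))%type.
Definition pstart (p : qpath) : vert Q := p.1.
Definition pend (p : qpath) : vert Q := last p.1 (map (@tgt Q) p.2).
Fixpoint valid_arrs (v : vert Q) (s : seq (arr Q)) : bool :=
  if s is a :: s' then (src a == v) && valid_arrs (tgt a) s' else true.
Definition valid (p : qpath) : bool := valid_arrs p.1 p.2.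
Definition pdeg (deg : arr Q -> int) (p : qpath) : int := \sum_(a <- p.2) deg a.

(** Composition p q = "p after q" (paths composed right to left);
    the empty list encodes the zero of the path algebra. *)
Definition pcomp (p q : qpath) : seq qpath :=
  if pend q == pstart p then [:: (pstart q, q.2 ++ p.2)] else [::].

Variable K : fieldType.

(** Elements of KQ as formal K-linear combinations of paths;
    their value is given by the coefficient function [coef]. *)
Definition KQ := seq (K * qpath).
Definition coef (x : KQ) (p : qpath) : K := \sum_(c <- x | c.2 == p) c.1.
Definition kq_add (x y : KQ) : KQ := x ++ y.
Definition kq_scale (c : K) (x : KQ) : KQ := [seq (c * t.1, t.2) | t <- x].
Definition kq_sub (x y : KQ) : KQ := x ++ kq_scale (-1) y.
Definition kq_mul (x y : KQ) : KQ :=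
  flatten [seq [seq (s.1 * t.1, pq) | pq <- pcomp s.2 t.2] | s <- x, t <- y].
Definition kq_sum (xs : seq KQ) : KQ := flatten xs.
Definition kq_path (p : qpath) : KQ := [:: (1, p)].
Definition kq_e (v : vert Q) : KQ := kq_path (v, [::]).
Definition kq_arr (a : arr Q) : KQ := kq_path (src a, [:: a]).

(** Membership in the two-sided ideal <R> of KQ generated by R:
    x = sum_t c_t * u_t * r_t * w_t with u_t, w_t paths of Q. *)
Definition in_ideal (R : seq KQ) (x : KQ) : Prop :=
  exists ts : seq (K * qpath * nat * qpath),
    all (fun t => [&& valid t.1.1.2, valid t.2 & (t.1.2 < size R)%N]) ts /\
    forall p, coef x p =
      coef (kq_sum [seq kq_scale t.1.1.1
                     (kq_mul (kq_mul (kq_path t.1.1.2) (nth [::] R t.1.2))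
                             (kq_path t.2)) | t <- ts]) p.

Definition kq_eqmod (R : seq KQ) (x y : KQ) : Prop := in_ideal R (kq_sub x y).

Definition in_eLe (i j : vert Q) (x : KQ) : bool :=
  all (fun t => [&& valid t.2, pstart t.2 == i & pend t.2 == j]) x.
Definition homog (deg : arr Q -> int) (d : int) (x : KQ) : bool :=
  all (fun t => pdeg deg t.2 == d) x.

(** * One-sided twisted complexes over P(Lambda)
    (bigoplus_{k < tsize} P_{tv k}[tsh k], tdiff), tdiff k l : C_l -> C_k. *)
Record twcx := Twcx {
  tsize : nat; tv : nat -> vert Q; tsh : nat -> int; tdiff : nat -> nat -> KQ }.

(** f : X -> Y homogeneous of degree n: entry f k l : C_l -> C'_k is an element
    of e_{v'_k} Lambda e_{v_l} of Lambda-degree |b| with |b| + r_l - r'_k = n. *)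
Definition tw_hom_homog (deg : arr Q -> int) (X Y : twcx) (n : int)
    (f : nat -> nat -> KQ) : Prop :=
  forall k l, (k < tsize Y)%N -> (l < tsize X)%N ->
    in_eLe (tv X l) (tv Y k) (f k l) && homog deg (n - tsh X l + tsh Y k) (f k l).

(** df = d_naive f + d' f - (-1)^n f d, with d_naive = 0 in P(Lambda). *)
Definition tw_d (X Y : twcx) (n : int) (f : nat -> nat -> KQ) (k l : nat) : KQ :=
  kq_sub (kq_sum [seq kq_mul (tdiff Y k m) (f m l) | m <- iota 0 (tsize Y)])
         (kq_scale ((-1) ^ n)
            (kq_sum [seq kq_mul (f k m) (tdiff X m l) | m <- iota 0 (tsize X)])).

(** H^n Hom(X, Y) = 0 for every n (all computations in Lambda = KQ/<R>). *)
Definition hom_acyclic (deg : arr Q -> int) (R : seq KQ) (X Y : twcx) : Prop :=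
  forall (n : int) (f : nat -> nat -> KQ),
    tw_hom_homog deg X Y n f ->
    (forall k l, (k < tsize Y)%N -> (l < tsize X)%N ->
       kq_eqmod R (tw_d X Y n f k l) [::]) ->
    exists g, tw_hom_homog deg X Y (n - 1) g /\
      forall k l, (k < tsize Y)%N -> (l < tsize X)%N ->
        kq_eqmod R (tw_d X Y (n - 1) g k l) (f k l).

Definition twP (i : vert Q) : twcx := Twcx 1 (fun _ => i) (fun _ => 0) (fun _ _ => [::]).

End PathAlgebra.

Record gpg (Q : quiver) := GPG {
  gdeg : arr Q -> int;
  gpin : pred (arr Q);
  gI : rel (arr Q);               (* gI a b : the length-2 path a b (b first) is in I^g *)
  (* for a pinched loop gamma_v: alpha_v^+, alpha_v^-, beta_v^+, beta_v^- *)
  gap : arr Q -> arr Q; gam : arr Q -> arr Q;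
  gbp : arr Q -> arr Q; gbm : arr Q -> arr Q }.

Section GPG.
Variables (Q : quiver) (D : gpg Q).
Let gen (a : arr Q) := ~~ gpin D a.

Definition is_gpg : Prop :=
  (forall g, gpin D g -> src g = tgt g /\ gdeg D g = 0) /\
  (forall g g', gpin D g -> gpin D g' -> src g = src g' -> g = g') /\
  (forall v, (#|[pred a | gen a && (src a == v)]| <= 2)%N) /\
  (forall v, (#|[pred a | gen a && (tgt a == v)]| <= 2)%N) /\
  (forall a b, gI D a b -> [&& gen a, gen b & src a == tgt b]) /\
  (forall a b b', gen a -> gI D a b -> gI D a b' -> b = b') /\
  (forall a c c', gen a -> gI D c a -> gI D c' a -> c = c') /\
  (forall a b b', gen a -> gen b -> gen b' -> src a = tgt b -> src a = tgt b' ->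
     ~~ gI D a b -> ~~ gI D a b' -> b = b') /\
  (forall a c c', gen a -> gen c -> gen c' -> src c = tgt a -> src c' = tgt a ->
     ~~ gI D c a -> ~~ gI D c' a -> c = c') /\
  (forall g, gpin D g ->
     [&& gen (gap D g), gen (gam D g), gen (gbp D g), gen (gbm D g),
         src (gap D g) == src g, src (gbp D g) == src g,
         tgt (gam D g) == src g, tgt (gbm D g) == src g,
         gI D (gbp D g) (gam D g) & gI D (gap D g) (gbm D g)]).

Variable K : fieldType.

Definition gpg_rels : seq (KQ Q K) :=
  flatten [seq [seq kq_path K (src b, [:: b; a]) | b <- enum (arr Q) & gI D a b]
          | a <- enum (arr Q)] ++
  flatten [seq let v := src g in
               [:: kq_mul (kq_arr K (gbp D g)) (kq_add (kq_arr K g) (kq_e K v));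
                   kq_mul (kq_add (kq_arr K g) (kq_e K v)) (kq_arr K (gbm D g));
                   kq_mul (kq_arr K (gap D g)) (kq_sub (kq_arr K g) (kq_e K v));
                   kq_mul (kq_sub (kq_arr K g) (kq_e K v)) (kq_arr K (gam D g))]
          | g <- enum (arr Q) & gpin D g].

Definition on_cycle (a : arr Q) : Prop :=
  exists p : qpath Q, [&& valid p, a \in p.2, pend p == pstart p & all gen p.2].

Definition is_acyclic_kronecker (al be : arr Q) (v1 v2 : vert Q) : Prop :=
  [/\ gen al /\ gen be /\ al != be,
      src al = v1 /\ src be = v1 /\ tgt al = v2 /\ tgt be = v2,
      src al != tgt al /\ src be != tgt be /\ gdeg D al = gdeg D be,
      (forall g, gpin D g -> src g <> v1 /\ src g <> v2)
    & ~ on_cycle al /\ ~ on_cycle be].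

Definition kron_B (al be : arr Q) (v1 v2 : vert Q) (mu : K) : twcx Q K :=
  Twcx 2 (fun k => if k == 0%N then v2 else v1)
         (fun k => if k == 0%N then gdeg D al else 1)
         (fun k l => if (k == 0%N) && (l == 1%N)
                     then kq_add (kq_arr K al) (kq_scale mu (kq_arr K be))
                     else [::]).
End GPG.

(* Write delta = al + mu be.  A morphism P_i -> B is a pair (x, y) with x in
   e_1 Lambda e_i and y in e_2 Lambda e_i, and it is a cocycle iff delta x = 0.
   As i is neither 1 nor 2, a path from i to 1 ends with an arrow c into 1, and
   by gentleness exactly one of al c, be c is a relation; a path from i to 2
   ends with al or be preceded by such a c.  Hence the linear map ldiv, which
   drops the last arrow a of a path with coefficient 1 (a = al), mu^-1 (a = be)
   or 0 (when a c is a relation), is a left inverse of delta * _ on paths from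
   i to 1, and delta * ldiv is the identity modulo the ideal on paths from i to
   2.  Since the pinched loops live away from 1 and 2, the relations ending in
   al or be are monomial, so ldiv preserves the ideal.  A cocycle (x, y) thus
   has x = ldiv (delta x) = 0 and y = delta (ldiv y): it is the coboundary of
   ldiv y.  The mirror map rdiv, dropping the first arrow, treats B -> P_i. *)

From Pilot Require Import Defs.
From HB Require Import structures.
From mathcomp Require Import all_boot all_order all_algebra.
From mathcomp Require Import ring.
Set Implicit Arguments. Unset Strict Implicit. Unset Printing Implicit Defensive.
Import GRing.Theory.
Local Open Scope ring_scope.

(** * Formal linear combinations of paths *)

Notation "x =c y" := (coef x =1 coef y) (at level 70, no associativity).

Section FormalSums.
Variables (Q : quiver) (K : fieldType).
Implicit Types (x y : KQ Q K) (p q u w : qpath Q) (h : qpath Q -> KQ Q K).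

Lemma coef_nil p : coef ([::] : KQ Q K) p = 0.
Proof. by rewrite /coef big_nil. Qed.

Lemma coef_cons t x p : coef (t :: x) p = (if t.2 == p then t.1 else 0) + coef x p.
Proof. by rewrite /coef big_cons; case: ifP; rewrite ?add0r. Qed.

Lemma coef_cat x y p : coef (x ++ y) p = coef x p + coef y p.
Proof. by rewrite /coef big_cat. Qed.

Lemma coef_scale c x p : coef (kq_scale c x) p = c * coef x p.
Proof.
elim: x => [|t x IH]; first by rewrite !coef_nil mulr0.
by rewrite /= !coef_cons IH /=; case: ifP; rewrite ?mulr0 ?add0r // mulrDr.
Qed.

Lemma coef_sum (xs : seq (KQ Q K)) p : coef (kq_sum xs) p = \sum_(x <- xs) coef x p.
Proof.
elim: xs => [|x xs IH]; first by rewrite big_nil coef_nil.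
by rewrite /kq_sum /= coef_cat IH big_cons.
Qed.

Lemma coef_sub x y p : coef (kq_sub x y) p = coef x p - coef y p.
Proof. by rewrite /kq_sub coef_cat coef_scale mulN1r. Qed.

Lemma coef_path q p : coef (kq_path K q) p = (q == p)%:R.
Proof. by rewrite /kq_path coef_cons coef_nil addr0 /=; case: ifP. Qed.

Lemma coefE x p : coef x p = \sum_(t <- x) t.1 * (t.2 == p)%:R.
Proof.
elim: x => [|t x IH]; first by rewrite coef_nil big_nil.
by rewrite coef_cons big_cons IH; case: ifP; rewrite ?mulr1 ?mulr0.
Qed.

Lemma kq_scale0 x : kq_scale 0 x =c [::].
Proof. by move=> p; rewrite coef_scale mul0r coef_nil. Qed.

Lemma kq_sub_eqc x x' y y' : x =c x' -> y =c y' -> kq_sub x y =c kq_sub x' y'.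
Proof. by move=> ex ey p; rewrite !coef_sub ex ey. Qed.

Lemma big_coef_support (F : qpath Q -> K) x (s : seq (qpath Q)) :
  uniq s -> {subset map snd x <= s} ->
  \sum_(t <- x) t.1 * F t.2 = \sum_(p <- s) coef x p * F p.
Proof.
move=> us; elim: x => [|t x IH] sub.
  by rewrite big_nil big1 // => p _; rewrite coef_nil mul0r.
rewrite big_cons IH; last by move=> p hp; apply: sub; rewrite inE hp orbT.
have ts : t.2 \in s by apply: sub; rewrite inE eqxx.
under [RHS]eq_bigr => p _ do rewrite coef_cons mulrDl.
rewrite big_split /=; congr (_ + _).
rewrite (bigD1_seq t.2) //= eqxx big1 ?addr0 // => p /negPf hp.
by rewrite eq_sym hp mul0r.
Qed.

Lemma eq_big_coef (F : qpath Q -> K) x y : x =c y ->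
  \sum_(t <- x) t.1 * F t.2 = \sum_(t <- y) t.1 * F t.2.
Proof.
move=> exy; set s := undup (map snd (x ++ y)).
have us : uniq s by exact: undup_uniq.
rewrite (@big_coef_support F x s) ?(@big_coef_support F y s) //.
- by apply: eq_bigr => p _; rewrite exy.
- by move=> p hp; rewrite mem_undup map_cat mem_cat hp orbT.
- by move=> p hp; rewrite mem_undup map_cat mem_cat hp.
Qed.

Definition kq_lin h x : KQ Q K := flatten [seq kq_scale t.1 (h t.2) | t <- x].

Lemma kq_lin_cat h x y : kq_lin h (x ++ y) = kq_lin h x ++ kq_lin h y.
Proof. by rewrite /kq_lin map_cat flatten_cat. Qed.

Lemma coef_lin h x p : coef (kq_lin h x) p = \sum_(t <- x) t.1 * coef (h t.2) p.
Proof.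
elim: x => [|t x IH]; first by rewrite coef_nil big_nil.
by rewrite /kq_lin /= coef_cat coef_scale -/(kq_lin h x) IH big_cons.
Qed.

Lemma eq_kq_lin h x y : x =c y -> kq_lin h x =c kq_lin h y.
Proof. by move=> exy p; rewrite !coef_lin (eq_big_coef (fun q => coef (h q) p) exy). Qed.

Lemma eq_in_kq_lin h h' x :
  (forall t, t \in x -> h t.2 =c h' t.2) -> kq_lin h x =c kq_lin h' x.
Proof.
move=> e p; rewrite !coef_lin big_seq_cond [RHS]big_seq_cond.
by apply: eq_bigr => t /andP[tx _]; rewrite e.
Qed.

Lemma kq_lin_id x : kq_lin (kq_path K) x =c x.
Proof. by move=> p; rewrite coef_lin coefE; apply: eq_bigr => t _; rewrite coef_path. Qed.

Lemma kq_lin_path h q : kq_lin h (kq_path K q) =c h q.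
Proof. by move=> p; rewrite coef_lin big_cons big_nil addr0 mul1r. Qed.

Lemma kq_lin_comp h h' x : kq_lin h (kq_lin h' x) =c kq_lin (fun q => kq_lin h (h' q)) x.
Proof.
move=> p; rewrite !coef_lin; elim: x => [|t x IH]; first by rewrite !big_nil.
rewrite /kq_lin /= big_cat -/(kq_lin h' x) IH big_cons coef_lin; congr (_ + _).
rewrite /kq_scale big_map big_distrr; apply: eq_bigr => t' _ /=; by rewrite mulrA.
Qed.

Lemma kq_lin_scale h c x : kq_lin h (kq_scale c x) =c kq_scale c (kq_lin h x).
Proof.
move=> p; rewrite coef_scale !coef_lin /kq_scale big_map big_distrr.
by apply: eq_bigr => t _ /=; rewrite mulrA.
Qed.

Lemma kq_lin_scale_fun h c x :
  kq_lin (fun q => kq_scale c (h q)) x =c kq_scale c (kq_lin h x).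
Proof.
move=> p; rewrite coef_scale !coef_lin big_distrr; apply: eq_bigr => t _.
by rewrite coef_scale mulrCA.
Qed.

Lemma kq_lin_sub h h' x :
  kq_lin (fun q => kq_sub (h q) (h' q)) x =c kq_sub (kq_lin h x) (kq_lin h' x).
Proof.
move=> p; rewrite coef_sub !coef_lin -sumrB; apply: eq_bigr => t _.
by rewrite coef_sub mulrBr.
Qed.

Lemma coef_mul x y r : coef (kq_mul x y) r =
  \sum_(s <- x) s.1 * \sum_(t <- y) t.1 * (r \in Defs.pcomp s.2 t.2)%:R.
Proof.
rewrite /kq_mul -/(kq_sum _) coef_sum.
elim: x => [|s x IH]; first by rewrite !big_nil.
rewrite /= big_cat IH big_cons big_map big_distrr; congr (_ + _).
apply: eq_bigr => t _ /=; rewrite mulrA /Defs.pcomp; case: ifP => _ /=.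
  by rewrite coef_cons coef_nil addr0 inE eq_sym; case: eqP; rewrite ?mulr1 ?mulr0.
by rewrite coef_nil mulr0.
Qed.

Lemma eq_kq_mul x x' y y' : x =c x' -> y =c y' -> kq_mul x y =c kq_mul x' y'.
Proof.
move=> ex ey r; rewrite !coef_mul.
rewrite (eq_big_coef (fun q => \sum_(t <- y) t.1 * (r \in Defs.pcomp q t.2)%:R) ex).
apply: eq_bigr => s _; congr (_ * _).
exact: (eq_big_coef (fun q => (r \in Defs.pcomp s.2 q)%:R) ey).
Qed.

Lemma kq_mul_linr x y : kq_mul x y =c kq_lin (fun q => kq_mul x (kq_path K q)) y.
Proof.
move=> r; rewrite coef_mul coef_lin.
under eq_bigr do rewrite big_distrr.
rewrite exchange_big; apply: eq_bigr => t _ /=.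
rewrite coef_mul big_distrr; apply: eq_bigr => s _.
by rewrite big_cons big_nil addr0 /= mul1r mulrCA.
Qed.

Lemma kq_mul_linl x y : kq_mul x y =c kq_lin (fun q => kq_mul (kq_path K q) y) x.
Proof.
move=> r; rewrite coef_mul coef_lin; apply: eq_bigr => s _.
by rewrite coef_mul big_cons big_nil addr0 /= mul1r.
Qed.

Lemma kq_mul_lin_fun_r x h y :
  kq_mul x (kq_lin h y) =c kq_lin (fun q => kq_mul x (h q)) y.
Proof.
apply: ftrans (kq_mul_linr _ _) _; apply: ftrans (kq_lin_comp _ _ _) _.
by apply: eq_in_kq_lin => t _; apply: fsym; apply: kq_mul_linr.
Qed.

Lemma kq_mul_lin_fun_l h x y :
  kq_mul (kq_lin h x) y =c kq_lin (fun q => kq_mul (h q) y) x.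
Proof.
apply: ftrans (kq_mul_linl _ _) _; apply: ftrans (kq_lin_comp _ _ _) _.
by apply: eq_in_kq_lin => t _; apply: fsym; apply: kq_mul_linl.
Qed.

Lemma kq_mul_scalel c x y : kq_mul (kq_scale c x) y =c kq_scale c (kq_mul x y).
Proof.
move=> r; rewrite coef_scale !coef_mul /kq_scale big_map big_distrr.
by apply: eq_bigr => s _ /=; rewrite mulrA.
Qed.

Lemma kq_mul_scaler c x y : kq_mul x (kq_scale c y) =c kq_scale c (kq_mul x y).
Proof.
move=> r; rewrite coef_scale !coef_mul big_distrr; apply: eq_bigr => s _ /=.
rewrite /kq_scale big_map mulrCA; congr (_ * _).
by rewrite big_distrr; apply: eq_bigr => t _ /=; rewrite mulrA.
Qed.

Lemma kq_mulr0 x : kq_mul x [::] =c [::].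
Proof. by move=> r; rewrite coef_mul coef_nil big1 // => s _; rewrite big_nil mulr0. Qed.

Lemma kq_mul_path p q : kq_mul (kq_path K p) (kq_path K q) =c
  (if pend q == pstart p then kq_path K (pstart q, q.2 ++ p.2) else [::]).
Proof.
move=> r; rewrite coef_mul !big_cons !big_nil !addr0 /= !mul1r /Defs.pcomp.
by case: ifP => _; rewrite ?coef_path ?coef_nil // inE eq_sym.
Qed.
Lemma kq_term0 q : [:: ((0 : K), q)] =c [::].
Proof. by move=> p; rewrite coef_cons /= if_same add0r. Qed.

Lemma coef_term (c : K) q p : coef [:: (c, q)] p = c * (q == p)%:R.
Proof. by rewrite coef_cons coef_nil addr0 /=; case: eqP; rewrite ?mulr1 ?mulr0. Qed.

Lemma kq_termE c q : [:: (c, q)] =c kq_scale c (kq_path K q).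
Proof. by move=> p; rewrite coef_scale coef_path coef_term. Qed.

Lemma in_eLe_scale i j c x : in_eLe i j (kq_scale c x) = in_eLe i j x.
Proof. by rewrite /in_eLe all_map. Qed.

Lemma homog_scale deg d c x : homog deg d (kq_scale c x) = homog deg d x.
Proof. by rewrite /homog all_map. Qed.

Lemma all_kq_lin (P : pred (qpath Q)) h x :
  (forall t, t \in x -> all (fun t' => P t'.2) (h t.2)) ->
  all (fun t => P t.2) (kq_lin h x).
Proof.
elim: x => [|t x IH] H //=; rewrite all_cat all_map H ?mem_head //=.
by apply: IH => t' ht'; apply: H; rewrite inE ht' orbT.
Qed.

Lemma mem_kq_mul x y t : t \in kq_mul x y ->
  exists sp tp, [/\ sp \in map snd x, tp \in map snd y, pend tp = pstart sp &
                    t.2 = (pstart tp, tp.2 ++ sp.2)].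
Proof.
rewrite /kq_mul => /flattenP [l /allpairsP [[s t'] [hs ht ->]] /mapP [pq hpq ->]] /=.
move: hpq; rewrite /Defs.pcomp; case: ifP => // /eqP e; rewrite inE => /eqP ->.
by exists s.2, t'.2; split => //; apply: map_f.
Qed.

End FormalSums.

Arguments kq_mul_path {Q K} p q.

(** * The two-sided ideal generated by the relations *)

Section Ideal.
Variables (Q : quiver) (K : fieldType) (R : seq (KQ Q K)).
Implicit Types (x y : KQ Q K) (p q u w : qpath Q) (h : qpath Q -> KQ Q K).

Definition kq_sandwich u x w : KQ Q K := kq_mul (kq_mul (kq_path K u) x) (kq_path K w).

Definition path_sandwich u w q : KQ Q K :=
  if (pend q == pstart u) && (pend w == pstart q)
  then kq_path K (pstart w, w.2 ++ (q.2 ++ u.2)) else [::].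

Lemma kq_sandwichE u x w : kq_sandwich u x w =c kq_lin (path_sandwich u w) x.
Proof.
apply: ftrans (eq_kq_mul (kq_mul_linr _ _) (frefl _)) _.
apply: ftrans (kq_mul_linl _ _) _; apply: ftrans (kq_lin_comp _ _ _) _.
apply: eq_in_kq_lin => t _; apply: ftrans (eq_kq_lin _ (kq_mul_path _ _)) _.
rewrite /path_sandwich; case: (pend t.2 == pstart u) => //=.
by apply: ftrans (kq_lin_path _ _) _; apply: kq_mul_path.
Qed.

Lemma kq_lin_path_sandwich h u w q : kq_lin h (path_sandwich u w q) =c
  (if (pend q == pstart u) && (pend w == pstart q)
   then h (pstart w, w.2 ++ (q.2 ++ u.2)) else [::]).
Proof. by rewrite /path_sandwich; case: ifP => _; [exact: kq_lin_path|]. Qed.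

Lemma eqc_ideal x y : x =c y -> in_ideal R x -> in_ideal R y.
Proof. by move=> e [ts [h1 h2]]; exists ts; split => // p; rewrite -e. Qed.

Lemma ideal0 : in_ideal R [::].
Proof. by exists [::]; split => // p; rewrite coef_nil coef_sum big_nil. Qed.

Lemma idealD x y : in_ideal R x -> in_ideal R y -> in_ideal R (x ++ y).
Proof.
move=> [ts [h1 h2]] [ts' [h1' h2']]; exists (ts ++ ts'); split.
  by rewrite all_cat h1 h1'.
by move=> p; rewrite coef_cat h2 h2' /kq_sum map_cat flatten_cat coef_cat.
Qed.

Lemma idealZ c x : in_ideal R x -> in_ideal R (kq_scale c x).
Proof.
move=> [ts [h1 h2]].
exists [seq (c * t.1.1.1, t.1.1.2, t.1.2, t.2) | t <- ts]; split.
  by rewrite all_map; apply: sub_all h1 => t.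
move=> p; rewrite coef_scale h2 !coef_sum -map_comp !big_map big_distrr /=.
by apply: eq_bigr => t _; rewrite !coef_scale mulrA.
Qed.

Lemma idealZ_inv c x : c != 0 -> in_ideal R (kq_scale c x) -> in_ideal R x.
Proof.
move=> c0 /(idealZ c^-1); apply: eqc_ideal => p.
by rewrite !coef_scale mulrA mulVf // mul1r.
Qed.

Lemma ideal_sandwich u r w : valid u -> valid w -> r \in R ->
  in_ideal R (kq_sandwich u r w).
Proof.
move=> vu vw rR; exists [:: (1, u, index r R, w)]; split.
  by rewrite /= vu vw index_mem rR.
by move=> p; rewrite coef_sum big_seq1 coef_scale mul1r nth_index.
Qed.

Lemma ideal_kq_lin h x : (forall t, t \in x -> in_ideal R (h t.2)) ->
  in_ideal R (kq_lin h x).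
Proof.
elim: x => [|t x IH] H; first exact: ideal0.
apply: idealD; first by apply/idealZ/H; rewrite inE eqxx.
by apply: IH => t' ht'; apply: H; rewrite inE ht' orbT.
Qed.

Lemma kq_lin_ideal h :
  (forall u r w, valid u -> valid w -> r \in R ->
     in_ideal R (kq_lin h (kq_sandwich u r w))) ->
  forall x, in_ideal R x -> in_ideal R (kq_lin h x).
Proof.
move=> H x [ts [h1 h2]]; apply: (eqc_ideal (fsym (eq_kq_lin h h2))).
rewrite /kq_sum; elim: ts h1 {h2} => [|t ts IH] /= h1; first exact: ideal0.
move/andP: h1 => [/and3P[vu vw rR] h1].
rewrite kq_lin_cat; apply: idealD; last exact: IH.
apply: (eqc_ideal (fsym (kq_lin_scale _ _ _))); apply: idealZ.
by apply: H => //; rewrite mem_nth.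
Qed.

Lemma kq_lin_sandwich_ideal h u r w c u' w' : valid u' -> valid w' -> r \in R ->
  (forall t, t \in r -> kq_lin h (path_sandwich u w t.2) =c
                        kq_scale c (path_sandwich u' w' t.2)) ->
  in_ideal R (kq_lin h (kq_sandwich u r w)).
Proof.
move=> vu vw rR H; apply: eqc_ideal (idealZ c (ideal_sandwich vu vw rR)).
apply: fsym; apply: ftrans (eq_kq_lin _ (kq_sandwichE _ _ _)) _.
apply: ftrans (kq_lin_comp _ _ _) _; apply: ftrans (eq_in_kq_lin H) _.
apply: ftrans (kq_lin_scale_fun _ _ _) _.
by move=> p; rewrite !coef_scale (kq_sandwichE u' r w').
Qed.

Lemma ideal_comb (c1 c2 : K) x y : (c1 = 0 \/ in_ideal R x) -> (c2 = 0 \/ in_ideal R y) ->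
  in_ideal R (kq_scale c1 x ++ kq_scale c2 y).
Proof.
have idealZ0 (c : K) z : c = 0 -> in_ideal R (kq_scale c z).
  by move=> ->; apply: eqc_ideal ideal0; apply: fsym; apply: kq_scale0.
by move=> [/idealZ0|/(idealZ c1)] h1 [/idealZ0|/(idealZ c2)] h2; apply: idealD.
Qed.

End Ideal.

Section Paths.
Variable Q : quiver.
Implicit Types (v : vert Q) (s : seq (arr Q)) (a : arr Q).

Lemma pend_rcons v s a : pend (v, rcons s a) = tgt a.
Proof. by rewrite /pend /= map_rcons last_rcons. Qed.

Lemma valid_arrs_cat v s1 s2 :
  valid_arrs v (s1 ++ s2) = valid_arrs v s1 && valid_arrs (pend (v, s1)) s2.
Proof. by elim: s1 v => [|a s1 IH] v //=; rewrite IH andbA. Qed.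

Lemma valid_rcons v s a : valid (v, rcons s a) = valid (v, s) && (src a == pend (v, s)).
Proof. by rewrite /valid /= -cats1 valid_arrs_cat /= andbT. Qed.

Lemma pdeg_rcons (deg : arr Q -> int) v s a :
  pdeg deg (v, rcons s a) = pdeg deg (v, s) + deg a.
Proof. by rewrite /pdeg /= -cats1 big_cat big_seq1. Qed.

Lemma pdeg_cons (deg : arr Q -> int) v v' s a :
  pdeg deg (v, a :: s) = deg a + pdeg deg (v', s).
Proof. by rewrite /pdeg /= big_cons. Qed.

End Paths.

(** * Division by delta along a graded Kronecker *)

Section Kronecker.
Variables (K : fieldType) (Q : quiver) (D : gpg Q).
Variables (al be : arr Q) (v1 v2 : vert Q) (mu : K).
Hypotheses (gentleD : is_gpg D) (kronD : is_acyclic_kronecker D al be v1 v2).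
Hypothesis mu_neq0 : mu != 0.

Local Notation gen a := (~~ gpin D a).
Local Notation R := (gpg_rels D K).
Implicit Types (a b c : arr Q) (v : vert Q) (s : seq (arr Q)) (p q u w : qpath Q).
Implicit Types (x y r : KQ Q K).

Lemma src_al : src al = v1. Proof. by case: kronD => _ []. Qed.
Lemma src_be : src be = v1. Proof. by case: kronD => _ [_ []]. Qed.
Lemma tgt_al : tgt al = v2. Proof. by case: kronD => _ [_ [_ []]]. Qed.
Lemma tgt_be : tgt be = v2. Proof. by case: kronD => _ [_ [_ []]]. Qed.
Lemma gen_al : gen al. Proof. by case: kronD => [[]]. Qed.
Lemma gen_be : gen be. Proof. by case: kronD => [[_ []]]. Qed.
Lemma al_neq_be : al != be. Proof. by case: kronD => [[_ []]]. Qed.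

Lemma src_kron a : a \in [:: al; be] -> src a = v1.
Proof. by rewrite !inE => /orP[] /eqP ->; rewrite ?src_al ?src_be. Qed.

Lemma tgt_kron a : a \in [:: al; be] -> tgt a = v2.
Proof. by rewrite !inE => /orP[] /eqP ->; rewrite ?tgt_al ?tgt_be. Qed.

Lemma gdeg_kron a : a \in [:: al; be] -> gdeg D a = gdeg D al.
Proof. by case: kronD => _ _ [_ [_ Ed]] _ _; rewrite !inE => /orP[] /eqP ->. Qed.

Lemma pinched_facts g : gpin D g ->
  [/\ g \notin [:: al; be], src g <> v1, src g <> v2 & tgt g = src g].
Proof.
move=> gp; case: kronD => _ _ _ /(_ g gp) [n1 n2] _.
case: gentleD => /(_ g gp) [loop _] _; split => //.
by rewrite !inE negb_or; apply/andP; split; apply: contraTneq gp => ->;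
  rewrite ?gen_al ?gen_be.
Qed.

Lemma gen_incident c :
  [\/ src c = v1, src c = v2, tgt c = v1 | tgt c = v2] -> gen c.
Proof.
move=> H; apply/negP => /pinched_facts [_ n1 n2 loop].
by case: H => E; [apply: n1|apply: n2|apply: n1; rewrite -loop|apply: n2; rewrite -loop].
Qed.

Lemma gI_follow_xor c : tgt c = v1 -> gI D al c = ~~ gI D be c.
Proof.
move=> tc; have gc : gen c by apply: gen_incident; rewrite tc; constructor 3.
case: gentleD => _ [_ [_ [_ [_ [_ [uniq_rel [_ [uniq_nrel _]]]]]]]].
case E1: (gI D al c); case E2: (gI D be c) => //=.
- by move: al_neq_be; rewrite (uniq_rel c al be) ?eqxx.
- move: al_neq_be; rewrite (uniq_nrel c al be) ?gen_al ?gen_be ?E1 ?E2 ?eqxx //.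
  + by rewrite src_al tc.
  + by rewrite src_be tc.
Qed.

Lemma gI_precede_xor c : src c = v2 -> gI D c al = ~~ gI D c be.
Proof.
move=> sc; have gc : gen c by apply: gen_incident; rewrite sc; constructor 2.
case: gentleD => _ [_ [_ [_ [_ [uniq_rel [_ [uniq_nrel _]]]]]]].
case E1: (gI D c al); case E2: (gI D c be) => //=.
- by move: al_neq_be; rewrite (uniq_rel c al be) ?eqxx.
- move: al_neq_be; rewrite (uniq_nrel c al be) ?gen_al ?gen_be ?E1 ?E2 ?eqxx //.
  + by rewrite sc tgt_al.
  + by rewrite sc tgt_be.
Qed.

Lemma kron_card_gt2 (P : pred (arr Q)) a :
  P al -> P be -> P a -> a \notin [:: al; be] -> (2 < #|P|)%N.
Proof.
move=> Pal Pbe Pa na.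
have u : uniq [:: al; be; a].
  by move: na; rewrite /= !inE !negb_or al_neq_be => /andP[n1 n2]; rewrite !(eq_sym _ a) n1 n2.
have -> : (2 < #|P|)%N = (size [:: al; be; a] <= #|P|)%N by [].
move/card_uniqP: u => <-; apply: subset_leq_card.
by apply/subsetP => z; rewrite !inE => /or3P[] /eqP ->.
Qed.

Lemma arrow_into_v2 a : tgt a = v2 -> a \in [:: al; be].
Proof.
move=> ta; apply: contraT => na; case: gentleD => _ [_ [_ [in_le2 _]]].
have ga : gen a by apply: gen_incident; rewrite ta; constructor 4.
have := @kron_card_gt2 [pred z | gen z && (tgt z == v2)] a.
by rewrite /= gen_al gen_be ga tgt_al tgt_be ta eqxx ltnNge in_le2 => /(_ isT isT isT na).
Qed.

Lemma arrow_out_of_v1 a : src a = v1 -> a \in [:: al; be].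
Proof.
move=> sa; apply: contraT => na; case: gentleD => _ [_ [out_le2 _]].
have ga : gen a by apply: gen_incident; rewrite sa; constructor 1.
have := @kron_card_gt2 [pred z | gen z && (src z == v1)] a.
by rewrite /= gen_al gen_be ga src_al src_be sa eqxx ltnNge out_le2 => /(_ isT isT isT na).
Qed.

Definition ldiv_compatible r :=
  (forall t, t \in r -> exists s z, t.2.2 = rcons s z /\
      (z \in [:: al; be] -> exists b, t.2.2 = [:: b; z] /\ gI D z b)) /\
  (forall t t', t \in r -> t' \in r -> pend t.2 = v1 -> pend t'.2 = v1 ->
      last al t.2.2 = last al t'.2.2).

Definition rdiv_compatible r :=
  (forall t, t \in r -> exists z s, t.2.2 = z :: s /\
      (z \in [:: al; be] -> exists b, t.2.2 = [:: z; b] /\ gI D b z)) /\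
  (forall t t', t \in r -> t' \in r -> pstart t.2 = v2 -> pstart t'.2 = v2 ->
      head al t.2.2 = head al t'.2.2).

Definition pinch_factor g y := {subset map snd y <= [:: (src g, [:: g]); (src g, [::])]}.

Lemma monomial_compatible a b : gI D a b ->
  ldiv_compatible (kq_path K (src b, [:: b; a])) /\
  rdiv_compatible (kq_path K (src b, [:: b; a])).
Proof.
move=> gab; split; split.
- move=> t /[!inE] /eqP -> /=; exists [:: b], a; split => // _; by exists b.
- by move=> t t' /[!inE] /eqP -> /eqP ->.
- move=> t /[!inE] /eqP -> /=; exists b, [:: a]; split => // _; by exists a.
- by move=> t t' /[!inE] /eqP -> /eqP ->.
Qed.

Lemma ldiv_compatible_arrow_mul a y : a \notin [:: al; be] ->
  ldiv_compatible (kq_mul (kq_arr K a) y).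
Proof.
move=> na; split.
- move=> t /mem_kq_mul [sp [tp [/[!inE] /eqP -> _ _ ->]]] /=.
  by exists tp.2, a; rewrite cats1; split => // /(negP na).
- move=> t t' /mem_kq_mul [sp [tp [/[!inE] /eqP -> _ _ ->]]].
  move=> /mem_kq_mul [sp' [tp' [/[!inE] /eqP -> _ _ ->]]] _ _ /=.
  by rewrite !cats1 !last_rcons.
Qed.

Lemma rdiv_compatible_mul_arrow a y : a \notin [:: al; be] ->
  rdiv_compatible (kq_mul y (kq_arr K a)).
Proof.
move=> na; split.
- move=> t /mem_kq_mul [sp [tp [_ /[!inE] /eqP -> _ ->]]] /=.
  by exists a, sp.2; split => // /(negP na).
- move=> t t' /mem_kq_mul [sp [tp [_ /[!inE] /eqP -> _ ->]]].
  by move=> /mem_kq_mul [sp' [tp' [_ /[!inE] /eqP -> _ ->]]].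
Qed.

Lemma ldiv_compatible_mul_arrow g a y : gpin D g -> tgt a = src g ->
  pinch_factor g y -> ldiv_compatible (kq_mul y (kq_arr K a)).
Proof.
move=> /pinched_facts [ng n1 n2 loop] ta yg.
have na : a \notin [:: al; be] by apply/negP => /tgt_kron; rewrite ta.
split.
- move=> t /mem_kq_mul [sp [tp [/yg hs /[!inE] /eqP -> _ ->]]] /=.
  case/predU1P: hs => [->|/predU1P[->|//]] /=.
    by exists [:: a], g; split => // /(negP ng).
  by exists [::], a; split => // /(negP na).
- move=> t t' /mem_kq_mul [sp [tp [/yg hs /[!inE] /eqP -> _ ->]]] _ e; case: n1.
  by rewrite -e; case/predU1P: hs => [->|/predU1P[->|//]]; rewrite /pend /= ?loop.
Qed.

Lemma rdiv_compatible_arrow_mul g a y : gpin D g -> src a = src g ->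
  pinch_factor g y -> rdiv_compatible (kq_mul (kq_arr K a) y).
Proof.
move=> /pinched_facts [ng n1 n2 _] sa yg.
have na : a \notin [:: al; be] by apply/negP => /src_kron; rewrite sa.
split.
- move=> t /mem_kq_mul [sp [tp [/[!inE] /eqP -> /yg ht _ ->]]] /=.
  case/predU1P: ht => [->|/predU1P[->|//]] /=.
    by exists g, [:: a]; split => // /(negP ng).
  by exists a, [::]; split => // /(negP na).
- move=> t t' /mem_kq_mul [sp [tp [_ /yg ht _ ->]]] _ /=.
  by case/predU1P: ht => [->|/predU1P[->|//]].
Qed.

Lemma rels_compatible r : r \in R -> ldiv_compatible r /\ rdiv_compatible r.
Proof.
rewrite mem_cat => /orP[/flatten_mapP [a _ /mapP [b hb ->]] | ].
  by apply: monomial_compatible; move: hb; rewrite mem_filter => /andP[].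
move=> /flatten_mapP [g]; rewrite mem_filter => /andP[gp _].
have [_ n1 n2 _] := pinched_facts gp.
have notkron_src a : src a = src g -> a \notin [:: al; be].
  by move=> sa; apply/negP => /src_kron; rewrite sa.
have notkron_tgt a : tgt a = src g -> a \notin [:: al; be].
  by move=> ta; apply/negP => /tgt_kron; rewrite ta.
case: gentleD => _ [_ [_ [_ [_ [_ [_ [_ [_ /(_ g gp)]]]]]]]].
move=> /and5P[_ _ _ _ /and5P[/eqP sap /eqP sbp /eqP tam /eqP tbm _]].
have y1 : pinch_factor g (kq_add (kq_arr K g) (kq_e K (src g))).
  by move=> ?; rewrite /= !inE.
have y2 : pinch_factor g (kq_sub (kq_arr K g) (kq_e K (src g))).
  by move=> ?; rewrite /= !inE.
rewrite !inE => /or4P[] /eqP ->; split.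
all: first [ exact/ldiv_compatible_arrow_mul/notkron_src
           | exact/rdiv_compatible_mul_arrow/notkron_tgt
           | exact: (ldiv_compatible_mul_arrow gp)
           | exact: (rdiv_compatible_arrow_mul gp) ].
Qed.

Lemma monomial_rel a b : gI D a b -> kq_path K (src b, [:: b; a]) \in R.
Proof.
move=> gab; rewrite mem_cat; apply/orP; left; apply/flatten_mapP; exists a.
  by rewrite mem_enum.
by apply: map_f; rewrite mem_filter gab mem_enum.
Qed.

Lemma monomial_ideal a b v s1 s2 : gI D a b -> valid (v, s1) -> pend (v, s1) = src b ->
  valid (tgt a, s2) -> in_ideal R (kq_path K (v, s1 ++ b :: a :: s2)).
Proof.
move=> gab vs1 es1 vs2; apply: eqc_ideal (ideal_sandwich vs2 vs1 (monomial_rel gab)).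
apply: ftrans (kq_sandwichE _ _ _) _; apply: ftrans (kq_lin_path _ _) _.
by rewrite /path_sandwich /= eqxx es1 eqxx.
Qed.

Definition delta : KQ Q K := kq_add (kq_arr K al) (kq_scale mu (kq_arr K be)).

Definition ldiv_coef a c : K :=
  if a == al then (if gI D al c then 0 else 1)
  else if a == be then (if gI D be c then 0 else mu^-1) else 0.

Definition ldiv q : KQ Q K :=
  match rev q.2 with a :: c :: s => [:: (ldiv_coef a c, (q.1, rev (c :: s)))] | _ => [::] end.

Lemma ldiv_rcons2 v s c a : ldiv (v, rcons (rcons s c) a) = [:: (ldiv_coef a c, (v, rcons s c))].
Proof. by rewrite /ldiv /= !rev_rcons rev_cons revK. Qed.

Lemma ldiv_coef_notkron a c : a \notin [:: al; be] -> ldiv_coef a c = 0.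
Proof. by rewrite !inE negb_or /ldiv_coef => /andP[/negPf -> /negPf ->]. Qed.

Lemma ldiv_coef_rel a c : a \in [:: al; be] -> gI D a c -> ldiv_coef a c = 0.
Proof.
rewrite /ldiv_coef !inE => /orP[] /eqP -> ->; rewrite ?eqxx //.
by rewrite eq_sym (negPf al_neq_be).
Qed.

Lemma ldiv_coef_delta c : tgt c = v1 -> ldiv_coef al c + mu * ldiv_coef be c = 1.
Proof.
move=> /gI_follow_xor; rewrite /ldiv_coef eqxx eq_sym (negPf al_neq_be) eqxx.
by case: (gI D al c); case: (gI D be c) => //= _; rewrite ?mulr0 ?addr0 ?add0r ?mulfV.
Qed.

Lemma ldiv_defect_al a c : a \in [:: al; be] -> tgt c = v1 ->
  ldiv_coef a c - (a == al)%:R = 0 \/ gI D al c.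
Proof.
move=> + /gI_follow_xor xor; rewrite /ldiv_coef !inE => /orP[] /eqP ->.
  by rewrite eqxx; case: (gI D al c); [right | left; rewrite subrr].
rewrite eq_sym (negPf al_neq_be) eqxx subr0 xor.
by case: (gI D be c); [left | right].
Qed.

Lemma ldiv_defect_be a c : a \in [:: al; be] -> tgt c = v1 ->
  ldiv_coef a c * mu - (a == be)%:R = 0 \/ gI D be c.
Proof.
move=> + /gI_follow_xor xor; rewrite /ldiv_coef !inE => /orP[] /eqP ->.
  rewrite eqxx (negPf al_neq_be) subr0 xor.
  by case: (gI D be c); [right | left; rewrite mul0r].
rewrite eq_sym (negPf al_neq_be) !eqxx.
by case: (gI D be c); [right | left; rewrite mulVf ?subrr].
Qed.

Lemma ldiv_notkron v s a : a \notin [:: al; be] -> ldiv (v, rcons s a) =c [::].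
Proof.
move=> na; case/lastP: s => [|s c] //.
by rewrite ldiv_rcons2 ldiv_coef_notkron //; apply: kq_term0.
Qed.

Lemma ldiv_rel_term r t v s : ldiv_compatible r -> t \in r -> ldiv (v, s ++ t.2.2) =c [::].
Proof.
case=> [shape _] tr; have [s' [z [e hz]]] := shape t tr.
have [kz|nz] := boolP (z \in [:: al; be]); last first.
  by rewrite e -rcons_cat; apply: ldiv_notkron.
have [b [-> gzb]] := hz kz.
rewrite -[s ++ _]/(s ++ [:: b] ++ [:: z]) catA !cats1 ldiv_rcons2 ldiv_coef_rel //.
exact: kq_term0.
Qed.

Lemma ldiv_sandwich_nil v r w : valid w -> r \in R ->
  in_ideal R (kq_lin ldiv (kq_sandwich (v, [::]) r w)).
Proof.
move=> vw rR; have [compat _] := rels_compatible rR.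
apply: (@kq_lin_sandwich_ideal _ _ _ _ _ _ _ 0 (v, [::]) w) => // t tr.
apply: ftrans (kq_lin_path_sandwich _ _ _ _) (ftrans _ (fsym (kq_scale0 _))).
by case: ifP => // _; rewrite cats0; apply: ldiv_rel_term compat tr.
Qed.

Lemma ldiv_sandwich_arrow v a r w : valid (v, [:: a]) -> valid w -> r \in R ->
  in_ideal R (kq_lin ldiv (kq_sandwich (v, [:: a]) r w)).
Proof.
move=> va vw rR; have [[shape same_last] _] := rels_compatible rR.
have [ka|na] := boolP (a \in [:: al; be]); last first.
  apply: (@kq_lin_sandwich_ideal _ _ _ _ _ _ _ 0 (v, [::]) w) => // t tr.
  apply: ftrans (kq_lin_path_sandwich _ _ _ _) (ftrans _ (fsym (kq_scale0 _))).
  by case: ifP => // _; rewrite cats1 -rcons_cat; apply: ldiv_notkron.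
have v_v1 : v = v1 by move: va; rewrite /valid /= andbT => /eqP <-; apply: src_kron.
have [/hasP [t0 t0r /eqP end_t0] | /hasPn none] := boolP (has (fun t => pend t.2 == v1) r).
  apply: (@kq_lin_sandwich_ideal _ _ _ _ _ _ _ (ldiv_coef a (last al t0.2.2)) (v, [::]) w)
    => // t tr.
  apply: ftrans (kq_lin_path_sandwich _ _ _ _) _; rewrite /path_sandwich /=.
  case: ifP => [/andP[/eqP end_t _]|_]; last by move=> p; rewrite coef_scale coef_nil mulr0.
  have [s [z [e _]]] := shape t tr.
  have := same_last t t0 tr t0r (etrans end_t v_v1) end_t0; rewrite e last_rcons => <-.
  by rewrite cats0 cats1 -!rcons_cat ldiv_rcons2; apply: kq_termE.
apply: (@kq_lin_sandwich_ideal _ _ _ _ _ _ _ 0 (v, [::]) w) => // t tr.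
apply: ftrans (kq_lin_path_sandwich _ _ _ _) (ftrans _ (fsym (kq_scale0 _))).
by rewrite /= v_v1 (negPf (none t tr)).
Qed.

Lemma ldiv_sandwich_long v s b a r w : valid (v, rcons (rcons s b) a) -> valid w ->
  r \in R -> in_ideal R (kq_lin ldiv (kq_sandwich (v, rcons (rcons s b) a) r w)).
Proof.
move=> vu vw rR.
apply: (@kq_lin_sandwich_ideal _ _ _ _ _ _ _ (ldiv_coef a b) (v, rcons s b) w) => //.
  by move: vu; rewrite valid_rcons => /andP[].
move=> t _; apply: ftrans (kq_lin_path_sandwich _ _ _ _) _; rewrite /path_sandwich /=.
case: ifP => _; last by move=> p; rewrite coef_scale coef_nil mulr0.
by rewrite -!rcons_cat ldiv_rcons2; apply: kq_termE.
Qed.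

Lemma ldiv_sandwich_ideal u r w : valid u -> valid w -> r \in R ->
  in_ideal R (kq_lin ldiv (kq_sandwich u r w)).
Proof.
case: u => v s; case/lastP: s => [|s a]; first by move=> _; apply: ldiv_sandwich_nil.
by case/lastP: s => [|s b]; [apply: ldiv_sandwich_arrow | apply: ldiv_sandwich_long].
Qed.

Lemma delta_mul_path p : pend p = v1 -> kq_mul delta (kq_path K p) =c
  kq_path K (pstart p, p.2 ++ [:: al]) ++ kq_scale mu (kq_path K (pstart p, p.2 ++ [:: be])).
Proof.
move=> ep r; rewrite coef_mul coef_cat coef_scale !coef_path /delta /=.
rewrite !big_cons !big_nil /Defs.pcomp /= src_al src_be ep eqxx !inE.
by rewrite ![r == _]eq_sym; case: eqP => _; case: eqP => _; rewrite /= ?mulr1n ?mulr0n; ring.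
Qed.

Lemma ldiv_delta_mul p : pend p = v1 -> pstart p != v1 ->
  kq_lin ldiv (kq_mul delta (kq_path K p)) =c kq_path K p.
Proof.
case: p => v s /= ep n1; case/lastP: s ep => [|s c] ep; first by move: n1; rewrite -ep eqxx.
apply: ftrans (eq_kq_lin _ (delta_mul_path ep)) _ => q.
rewrite kq_lin_cat coef_cat (kq_lin_scale _ _ _ q) coef_scale !(kq_lin_path ldiv _ q) /=.
rewrite !cats1 !ldiv_rcons2 !coef_term mulrA -mulrDl.
by rewrite ldiv_coef_delta // -(pend_rcons v s c).
Qed.

Lemma path_into_v2 q : valid q -> pend q = v2 -> pstart q != v1 -> pstart q != v2 ->
  exists s c a, [/\ q = (pstart q, rcons (rcons s c) a), a \in [:: al; be],
                    tgt c = v1 & valid (pstart q, rcons s c)].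
Proof.
case: q => v qs /= vq eq n1 n2.
case/lastP: qs vq eq => [|qs a] vq eq; first by move: n2; rewrite -eq eqxx.
rewrite pend_rcons in eq; have ka := arrow_into_v2 eq.
move: vq; rewrite valid_rcons => /andP[vq /eqP]; rewrite src_kron // => sa.
case/lastP: qs vq sa => [|s c] vq sa; first by move: n1; rewrite sa eqxx.
by exists s, c, a; split => //; rewrite -(pend_rcons v s c) sa.
Qed.

Lemma delta_mul_ldiv q : valid q -> pend q = v2 -> pstart q != v1 -> pstart q != v2 ->
  in_ideal R (kq_sub (kq_mul delta (ldiv q)) (kq_path K q)).
Proof.
move=> vq eq n1 n2; have [s [c [a [-> ka tc vsc]]]] := path_into_v2 vq eq n1 n2.
move: vsc; set v := pstart q => vsc; rewrite ldiv_rcons2.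
set A := kq_path K (v, rcons (rcons s c) al); set B := kq_path K (v, rcons (rcons s c) be).
have [vs es] : valid (v, s) /\ pend (v, s) = src c.
  by move: vsc; rewrite valid_rcons => /andP[-> /eqP].
have rel_ideal z : gI D z c -> in_ideal R (kq_path K (v, rcons (rcons s c) z)).
  by move=> gzc; rewrite -!cats1 -catA; apply: monomial_ideal.
have defect : kq_scale (ldiv_coef a c - (a == al)%:R) A ++
              kq_scale (ldiv_coef a c * mu - (a == be)%:R) B =c
              kq_sub (kq_mul delta [:: (ldiv_coef a c, (v, rcons s c))])
                     (kq_path K (v, rcons (rcons s c) a)).
  move=> r; rewrite coef_sub (eq_kq_mul (frefl _) (kq_termE _ _) r).
  rewrite (kq_mul_scaler _ _ _ r) coef_scale (delta_mul_path _ r) ?pend_rcons //.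
  rewrite !coef_cat !coef_scale /A /B !coef_path /= !cats1.
  move: ka; rewrite !inE => /orP[] /eqP ->.
  + by rewrite eqxx (negPf al_neq_be) /=; ring.
  + by rewrite eqxx eq_sym (negPf al_neq_be) /=; ring.
apply: eqc_ideal defect _; apply: ideal_comb.
- by case: (ldiv_defect_al ka tc) => [|/rel_ideal]; [left|right].
- by case: (ldiv_defect_be ka tc) => [|/rel_ideal]; [left|right].
Qed.

Local Notation B := (kron_B D al be v1 v2 mu).

Lemma tw_d_to_B0 i n g : tw_d (twP K i) B n g 0 0 =c kq_mul delta (g 1%N 0%N).
Proof.
have -> : tw_d (twP K i) B n g 0 0 =
  kq_sub (kq_mul [::] (g 0%N 0%N) ++ (kq_mul delta (g 1%N 0%N) ++ [::]))
         (kq_scale ((-1) ^ n) (kq_mul (g 0%N 0%N) [::] ++ [::])) by [].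
by move=> r; rewrite coef_sub !coef_cat coef_scale coef_cat (kq_mulr0 _ r) !coef_nil; ring.
Qed.

Lemma tw_d_to_B1 i n g : tw_d (twP K i) B n g 1 0 =c [::].
Proof.
have -> : tw_d (twP K i) B n g 1 0 =
  kq_sub (kq_mul [::] (g 0%N 0%N) ++ (kq_mul [::] (g 1%N 0%N) ++ [::]))
         (kq_scale ((-1) ^ n) (kq_mul (g 1%N 0%N) [::] ++ [::])) by [].
by move=> r; rewrite coef_sub !coef_cat coef_scale coef_cat (kq_mulr0 _ r) !coef_nil; ring.
Qed.

Lemma tw_d_from_B0 i n g : tw_d B (twP K i) n g 0 0 =c [::].
Proof.
have -> : tw_d B (twP K i) n g 0 0 =
  kq_sub (kq_mul [::] (g 0%N 0%N) ++ [::])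
         (kq_scale ((-1) ^ n) (kq_mul (g 0%N 0%N) [::] ++ (kq_mul (g 0%N 1%N) [::] ++ [::]))) by [].
by move=> r; rewrite coef_sub !coef_cat coef_scale !coef_cat !(kq_mulr0 _ r) !coef_nil; ring.
Qed.

Lemma tw_d_from_B1 i n g :
  tw_d B (twP K i) n g 0 1 =c kq_scale (- (-1) ^ n) (kq_mul (g 0%N 0%N) delta).
Proof.
have -> : tw_d B (twP K i) n g 0 1 =
  kq_sub (kq_mul [::] (g 0%N 1%N) ++ [::])
         (kq_scale ((-1) ^ n) (kq_mul (g 0%N 0%N) delta ++ (kq_mul (g 0%N 1%N) [::] ++ [::]))) by [].
by move=> r; rewrite coef_sub !coef_cat !coef_scale !coef_cat (kq_mulr0 _ r) !coef_nil; ring.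
Qed.

Lemma delta_mul_ideal_cancel i x : i != v1 -> in_eLe i v1 x ->
  in_ideal R (kq_mul delta x) -> in_ideal R x.
Proof.
move=> n1 xi /(kq_lin_ideal ldiv_sandwich_ideal); apply: eqc_ideal.
apply: ftrans (eq_kq_lin _ (kq_mul_linr _ _)) _; apply: ftrans (kq_lin_comp _ _ _) _.
apply: ftrans _ (kq_lin_id x); apply: eq_in_kq_lin => t tx.
have /and3P[_ /eqP st /eqP et] := allP xi t tx.
by apply: ldiv_delta_mul; rewrite ?st.
Qed.

Lemma delta_mul_ldiv_ideal i y : i != v1 -> i != v2 -> in_eLe i v2 y ->
  in_ideal R (kq_sub (kq_mul delta (kq_lin ldiv y)) y).
Proof.
move=> n1 n2 yi.
have term_ideal t : t \in y -> in_ideal R (kq_sub (kq_mul delta (ldiv t.2)) (kq_path K t.2)).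
  move=> ty; have /and3P[vt /eqP st /eqP et] := allP yi t ty.
  by apply: delta_mul_ldiv; rewrite ?st.
apply: eqc_ideal (@ideal_kq_lin _ _ R (fun q => kq_sub (kq_mul delta (ldiv q)) (kq_path K q)) y term_ideal).
apply: ftrans (kq_lin_sub _ _ _) _.
by apply: kq_sub_eqc; [apply: fsym; apply: kq_mul_lin_fun_r | apply: kq_lin_id].
Qed.

Lemma ldiv_path_into_v2 q : valid q -> pend q = v2 -> pstart q != v1 -> pstart q != v2 ->
  all (fun t => [&& valid t.2, pstart t.2 == pstart q, pend t.2 == v1 &
                   pdeg (gdeg D) t.2 == pdeg (gdeg D) q - gdeg D al]) (ldiv q).
Proof.
move=> vq eq n1 n2; have [s [c [a [E ka tc vsc]]]] := path_into_v2 vq eq n1 n2.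
by rewrite E ldiv_rcons2 /= vsc pend_rcons tc !pdeg_rcons (gdeg_kron ka) addrK !eqxx.
Qed.

Lemma ldiv_eLe_homog i y d : i != v1 -> i != v2 -> in_eLe i v2 y ->
  homog (gdeg D) d y ->
  in_eLe i v1 (kq_lin ldiv y) && homog (gdeg D) (d - gdeg D al) (kq_lin ldiv y).
Proof.
move=> n1 n2 yi yd.
have shape t : t \in y -> all (fun t' => [&& valid t'.2, pstart t'.2 == i, pend t'.2 == v1 &
                 pdeg (gdeg D) t'.2 == d - gdeg D al]) (ldiv t.2).
  move=> ty; have /and3P[vt /eqP st /eqP et] := allP yi t ty.
  rewrite -(eqP (allP yd t ty)) -st; apply: ldiv_path_into_v2; rewrite ?st //.
apply/andP; split.
- apply: (all_kq_lin (P := fun p => [&& valid p, pstart p == i & pend p == v1])) => t ty.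
  by apply: sub_all (shape t ty) => t' /and4P[-> -> ->].
- apply: (all_kq_lin (P := fun p => pdeg (gdeg D) p == d - gdeg D al)) => t ty.
  by apply: sub_all (shape t ty) => t' /and4P[_ _ _ ->].
Qed.

Lemma hom_acyclic_P_B i : i != v1 -> i != v2 -> hom_acyclic (gdeg D) R (twP K i) B.
Proof.
move=> n1 n2 n f f_homog f_cocycle.
have /andP[f0_eLe f0_deg] := f_homog 0%N 0%N isT isT.
have /andP[f1_eLe _] := f_homog 1%N 0%N isT isT.
have f1_ideal : in_ideal R (f 1%N 0%N).
  apply: delta_mul_ideal_cancel n1 f1_eLe _.
  by apply: eqc_ideal (f_cocycle 0%N 0%N isT isT) => r; rewrite coef_sub coef_nil subr0 tw_d_to_B0.
have /andP[g_eLe g_deg] := ldiv_eLe_homog n1 n2 f0_eLe f0_deg.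
exists (fun k l => if k == 1%N then kq_lin ldiv (f 0%N 0%N) else [::]); split.
  move=> [|[|k]] [|l] //= _ _; rewrite g_eLe /=.
  by move: g_deg; rewrite !subr0 addrK subrK.
move=> [|[|k]] [|l] // _ _; rewrite /kq_eqmod.
- apply: eqc_ideal (delta_mul_ldiv_ideal n1 n2 f0_eLe).
  by apply: kq_sub_eqc => // r; rewrite tw_d_to_B0.
- apply: eqc_ideal (idealZ (-1) f1_ideal) => r.
  by rewrite coef_sub tw_d_to_B1 coef_nil coef_scale sub0r mulN1r.
Qed.

Definition rdiv_coef a c : K :=
  if a == al then (if gI D c al then 0 else 1)
  else if a == be then (if gI D c be then 0 else mu^-1) else 0.

Definition rdiv q : KQ Q K :=
  match q.2 with a :: c :: s => [:: (rdiv_coef a c, (tgt a, c :: s))] | _ => [::] end.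

Lemma rdiv_cons2 v a c s : rdiv (v, a :: c :: s) = [:: (rdiv_coef a c, (tgt a, c :: s))].
Proof. by []. Qed.

Lemma rdiv_coef_notkron a c : a \notin [:: al; be] -> rdiv_coef a c = 0.
Proof. by rewrite !inE negb_or /rdiv_coef => /andP[/negPf -> /negPf ->]. Qed.

Lemma rdiv_coef_rel a c : a \in [:: al; be] -> gI D c a -> rdiv_coef a c = 0.
Proof.
rewrite /rdiv_coef !inE => /orP[] /eqP -> ->; rewrite ?eqxx //.
by rewrite eq_sym (negPf al_neq_be).
Qed.

Lemma rdiv_coef_delta c : src c = v2 -> rdiv_coef al c + mu * rdiv_coef be c = 1.
Proof.
move=> /gI_precede_xor; rewrite /rdiv_coef eqxx eq_sym (negPf al_neq_be) eqxx.
by case: (gI D c al); case: (gI D c be) => //= _; rewrite ?mulr0 ?addr0 ?add0r ?mulfV.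
Qed.

Lemma rdiv_defect_al a c : a \in [:: al; be] -> src c = v2 ->
  rdiv_coef a c - (a == al)%:R = 0 \/ gI D c al.
Proof.
move=> + /gI_precede_xor xor; rewrite /rdiv_coef !inE => /orP[] /eqP ->.
  by rewrite eqxx; case: (gI D c al); [right | left; rewrite subrr].
rewrite eq_sym (negPf al_neq_be) eqxx subr0 xor.
by case: (gI D c be); [left | right].
Qed.

Lemma rdiv_defect_be a c : a \in [:: al; be] -> src c = v2 ->
  rdiv_coef a c * mu - (a == be)%:R = 0 \/ gI D c be.
Proof.
move=> + /gI_precede_xor xor; rewrite /rdiv_coef !inE => /orP[] /eqP ->.
  rewrite eqxx (negPf al_neq_be) subr0 xor.
  by case: (gI D c be); [right | left; rewrite mul0r].
rewrite eq_sym (negPf al_neq_be) !eqxx.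
by case: (gI D c be); [right | left; rewrite mulVf ?subrr].
Qed.

Lemma rdiv_notkron v a s : a \notin [:: al; be] -> rdiv (v, a :: s) =c [::].
Proof.
by move=> na; case: s => [|c s] //; rewrite rdiv_cons2 rdiv_coef_notkron //; apply: kq_term0.
Qed.

Lemma rdiv_rel_term r t v s : rdiv_compatible r -> t \in r -> rdiv (v, t.2.2 ++ s) =c [::].
Proof.
case=> [shape _] tr; have [z [s' [e hz]]] := shape t tr.
have [kz|nz] := boolP (z \in [:: al; be]); last by rewrite e; apply: rdiv_notkron.
have [b [-> gbz]] := hz kz.
by rewrite rdiv_cons2 rdiv_coef_rel //; apply: kq_term0.
Qed.

Lemma rdiv_sandwich_nil u r v : valid u -> r \in R ->
  in_ideal R (kq_lin rdiv (kq_sandwich u r (v, [::]))).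
Proof.
move=> vu rR; have [_ compat] := rels_compatible rR.
apply: (@kq_lin_sandwich_ideal _ _ _ _ _ _ _ 0 u (v, [::])) => // t tr.
apply: ftrans (kq_lin_path_sandwich _ _ _ _) (ftrans _ (fsym (kq_scale0 _))).
by case: ifP => // _; apply: rdiv_rel_term compat tr.
Qed.

Lemma rdiv_sandwich_arrow u r v a : valid u -> valid (v, [:: a]) -> r \in R ->
  in_ideal R (kq_lin rdiv (kq_sandwich u r (v, [:: a]))).
Proof.
move=> vu va rR; have [_ [shape same_head]] := rels_compatible rR.
have [ka|na] := boolP (a \in [:: al; be]); last first.
  apply: (@kq_lin_sandwich_ideal _ _ _ _ _ _ _ 0 u (v, [::])) => // t tr.
  apply: ftrans (kq_lin_path_sandwich _ _ _ _) (ftrans _ (fsym (kq_scale0 _))).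
  by case: ifP => // _; apply: rdiv_notkron.
have ta := tgt_kron ka.
have [/hasP [t0 t0r /eqP start_t0] | /hasPn none] := boolP (has (fun t => pstart t.2 == v2) r).
  apply: (@kq_lin_sandwich_ideal _ _ _ _ _ _ _ (rdiv_coef a (head al t0.2.2)) u (v2, [::]))
    => // t tr.
  apply: ftrans (kq_lin_path_sandwich _ _ _ _) _; rewrite /path_sandwich /pend /= ta.
  case: ifP => [/andP[_ /eqP start_t]|_]; last by move=> p; rewrite coef_scale coef_nil mulr0.
  have [z [s [e _]]] := shape t tr.
  have := same_head t t0 tr t0r (esym start_t) start_t0; rewrite e /= => <-.
  by rewrite rdiv_cons2 ta mulr1.
apply: (@kq_lin_sandwich_ideal _ _ _ _ _ _ _ 0 u (v, [::])) => // t tr.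
apply: ftrans (kq_lin_path_sandwich _ _ _ _) (ftrans _ (fsym (kq_scale0 _))).
by rewrite /= /pend /= ta [v2 == _]eq_sym (negPf (none t tr)) andbF.
Qed.

Lemma rdiv_sandwich_long u r v a c s : valid u -> valid (v, a :: c :: s) -> r \in R ->
  in_ideal R (kq_lin rdiv (kq_sandwich u r (v, a :: c :: s))).
Proof.
move=> vu vw rR.
apply: (@kq_lin_sandwich_ideal _ _ _ _ _ _ _ (rdiv_coef a c) u (tgt a, c :: s)) => //.
  by move: vw; rewrite /valid /= => /andP[_].
move=> t _; apply: ftrans (kq_lin_path_sandwich _ _ _ _) _; rewrite /path_sandwich /=.
by case: ifP => _; [apply: kq_termE | move=> p; rewrite coef_scale coef_nil mulr0].
Qed.

Lemma rdiv_sandwich_ideal u r w : valid u -> valid w -> r \in R ->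
  in_ideal R (kq_lin rdiv (kq_sandwich u r w)).
Proof.
move=> vu; case: w => v [|a [|c s]]; last exact: rdiv_sandwich_long.
  by move=> _; apply: rdiv_sandwich_nil.
exact: rdiv_sandwich_arrow.
Qed.

Lemma path_mul_delta p : pstart p = v2 -> kq_mul (kq_path K p) delta =c
  kq_path K (v1, al :: p.2) ++ kq_scale mu (kq_path K (v1, be :: p.2)).
Proof.
move=> sp r; rewrite coef_mul coef_cat coef_scale !coef_path /delta /=.
rewrite !big_cons !big_nil /Defs.pcomp /pend /= tgt_al tgt_be sp eqxx src_al src_be !inE.
by rewrite ![r == _]eq_sym; case: eqP => _; case: eqP => _; rewrite /= ?mulr1n ?mulr0n; ring.
Qed.

Lemma rdiv_mul_delta p : valid p -> pstart p = v2 -> pend p != v2 ->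
  kq_lin rdiv (kq_mul (kq_path K p) delta) =c kq_path K p.
Proof.
case: p => v [|c s] /= vp sp n2; first by move: n2; rewrite /pend /= sp eqxx.
move: vp; rewrite /valid /= => /andP[/eqP sc _].
apply: ftrans (eq_kq_lin _ (@path_mul_delta (v, c :: s) sp)) _ => q.
rewrite kq_lin_cat coef_cat (kq_lin_scale _ _ _ q) coef_scale !(kq_lin_path rdiv _ q) /=.
by rewrite !rdiv_cons2 tgt_al tgt_be !coef_term mulrA -mulrDl rdiv_coef_delta ?sc sp.
Qed.

Lemma path_from_v1 q : valid q -> pstart q = v1 -> pend q != v1 -> pend q != v2 ->
  exists a c s, [/\ q = (v1, a :: c :: s), a \in [:: al; be], src c = v2,
                    valid (v2, c :: s) & pend (v2, c :: s) = pend q].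
Proof.
case: q => v [|a qs] /= vq sq n1 n2; first by move: n1; rewrite /pend /= sq eqxx.
move: vq; rewrite /valid /= => /andP[/eqP sa vq].
have ka := arrow_out_of_v1 (etrans sa sq); have ta := tgt_kron ka.
case: qs vq n1 n2 => [|c s] vq n1 n2; first by move: n2; rewrite /pend /= ta eqxx.
move: (vq) => /andP[/eqP sc vs].
by exists a, c, s; rewrite sq sc ta; split; rewrite /valid //= eqxx.
Qed.

Lemma mul_delta_rdiv q : valid q -> pstart q = v1 -> pend q != v1 -> pend q != v2 ->
  in_ideal R (kq_sub (kq_mul (rdiv q) delta) (kq_path K q)).
Proof.
move=> vq sq n1 n2; have [a [c [s [-> ka sc vcs _]]]] := path_from_v1 vq sq n1 n2.
rewrite rdiv_cons2 (tgt_kron ka).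
set A := kq_path K (v1, al :: c :: s); set B := kq_path K (v1, be :: c :: s).
have vs : valid (tgt c, s) by move: vcs => /andP[].
have rel_ideal z : src z = v1 -> gI D c z -> in_ideal R (kq_path K (v1, z :: c :: s)).
  by move=> sz gcz; apply: (@monomial_ideal c z v1 [::]).
have defect : kq_scale (rdiv_coef a c - (a == al)%:R) A ++
              kq_scale (rdiv_coef a c * mu - (a == be)%:R) B =c
              kq_sub (kq_mul [:: (rdiv_coef a c, (v2, c :: s))] delta)
                     (kq_path K (v1, a :: c :: s)).
  move=> r; rewrite coef_sub (eq_kq_mul (kq_termE _ _) (frefl _) r).
  rewrite (kq_mul_scalel _ _ _ r) coef_scale (path_mul_delta _ r) //.
  rewrite !coef_cat !coef_scale /A /B !coef_path /=.
  move: (ka); rewrite !inE => /orP[] /eqP ->.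
  + by rewrite eqxx (negPf al_neq_be) /=; ring.
  + by rewrite eqxx eq_sym (negPf al_neq_be) /=; ring.
apply: eqc_ideal defect _; apply: ideal_comb.
- by case: (rdiv_defect_al ka sc) => [|/(rel_ideal _ src_al)]; [left|right].
- by case: (rdiv_defect_be ka sc) => [|/(rel_ideal _ src_be)]; [left|right].
Qed.

Lemma mul_delta_ideal_cancel i x : i != v2 -> in_eLe v2 i x ->
  in_ideal R (kq_mul x delta) -> in_ideal R x.
Proof.
move=> n2 xi /(kq_lin_ideal rdiv_sandwich_ideal); apply: eqc_ideal.
apply: ftrans (eq_kq_lin _ (kq_mul_linl _ _)) _; apply: ftrans (kq_lin_comp _ _ _) _.
apply: ftrans _ (kq_lin_id x); apply: eq_in_kq_lin => t tx.
have /and3P[vt /eqP st /eqP et] := allP xi t tx.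
by apply: rdiv_mul_delta; rewrite ?et.
Qed.

Lemma rdiv_mul_delta_ideal i y : i != v1 -> i != v2 -> in_eLe v1 i y ->
  in_ideal R (kq_sub (kq_mul (kq_lin rdiv y) delta) y).
Proof.
move=> n1 n2 yi.
have term_ideal t : t \in y -> in_ideal R (kq_sub (kq_mul (rdiv t.2) delta) (kq_path K t.2)).
  move=> ty; have /and3P[vt /eqP st /eqP et] := allP yi t ty.
  by apply: mul_delta_rdiv; rewrite ?et.
apply: eqc_ideal (@ideal_kq_lin _ _ R (fun q => kq_sub (kq_mul (rdiv q) delta) (kq_path K q)) y term_ideal).
apply: ftrans (kq_lin_sub _ _ _) _.
by apply: kq_sub_eqc; [apply: fsym; apply: kq_mul_lin_fun_l | apply: kq_lin_id].
Qed.

Lemma rdiv_path_from_v1 q : valid q -> pstart q = v1 -> pend q != v1 -> pend q != v2 ->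
  all (fun t => [&& valid t.2, pstart t.2 == v2, pend t.2 == pend q &
                   pdeg (gdeg D) t.2 == pdeg (gdeg D) q - gdeg D al]) (rdiv q).
Proof.
move=> vq sq n1 n2; have [a [c [s [E ka sc vcs ecs]]]] := path_from_v1 vq sq n1 n2.
rewrite -ecs E rdiv_cons2 /= (tgt_kron ka) vcs (pdeg_cons _ v1 v2 (c :: s) a).
by rewrite (gdeg_kron ka) addrC addKr !eqxx.
Qed.

Lemma rdiv_eLe_homog i y d : i != v1 -> i != v2 -> in_eLe v1 i y ->
  homog (gdeg D) d y ->
  in_eLe v2 i (kq_lin rdiv y) && homog (gdeg D) (d - gdeg D al) (kq_lin rdiv y).
Proof.
move=> n1 n2 yi yd.
have shape t : t \in y -> all (fun t' => [&& valid t'.2, pstart t'.2 == v2, pend t'.2 == i &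
                 pdeg (gdeg D) t'.2 == d - gdeg D al]) (rdiv t.2).
  move=> ty; have /and3P[vt /eqP st /eqP et] := allP yi t ty.
  rewrite -(eqP (allP yd t ty)) -et; apply: rdiv_path_from_v1; rewrite ?et //.
apply/andP; split.
- apply: (all_kq_lin (P := fun p => [&& valid p, pstart p == v2 & pend p == i])) => t ty.
  by apply: sub_all (shape t ty) => t' /and4P[-> -> ->].
- apply: (all_kq_lin (P := fun p => pdeg (gdeg D) p == d - gdeg D al)) => t ty.
  by apply: sub_all (shape t ty) => t' /and4P[_ _ _ ->].
Qed.

Lemma signz_neq0 (n : int) : (-1 : K) ^ n != 0.
Proof. by rewrite expfz_neq0 // oppr_eq0 oner_eq0. Qed.

Lemma hom_acyclic_B_P i : i != v1 -> i != v2 -> hom_acyclic (gdeg D) R B (twP K i).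
Proof.
move=> n1 n2 n f f_homog f_cocycle.
have /andP[f0_eLe _] := f_homog 0%N 0%N isT isT.
have /andP[f1_eLe f1_deg] := f_homog 0%N 1%N isT isT.
have f0_ideal : in_ideal R (f 0%N 0%N).
  apply: mul_delta_ideal_cancel n2 f0_eLe _.
  apply: (@idealZ_inv _ _ R (- (-1) ^ n)); first by rewrite oppr_eq0 signz_neq0.
  by apply: eqc_ideal (f_cocycle 0%N 1%N isT isT) => r; rewrite coef_sub coef_nil subr0 tw_d_from_B1.
have /andP[g_eLe g_deg] := rdiv_eLe_homog n1 n2 f1_eLe f1_deg.
pose c : K := - ((-1) ^ (n - 1))^-1.
exists (fun k l => if l == 0%N then kq_scale c (kq_lin rdiv (f 0%N 1%N)) else [::]); split.
  move=> [|k] [|[|l]] //= _ _; rewrite in_eLe_scale homog_scale g_eLe /=.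
  by move: g_deg; rewrite !addr0.
move=> [|k] [|[|l]] // _ _; rewrite /kq_eqmod.
- apply: eqc_ideal (idealZ (-1) f0_ideal) => r.
  by rewrite coef_sub tw_d_from_B0 coef_nil coef_scale sub0r mulN1r.
- apply: eqc_ideal (rdiv_mul_delta_ideal n1 n2 f1_eLe); apply: kq_sub_eqc => // r.
  rewrite tw_d_from_B1 coef_scale /= (kq_mul_scalel _ _ _ r) coef_scale mulrA.
  by rewrite /c mulrNN mulfV ?mul1r // signz_neq0.
Qed.

End Kronecker.

Theorem lemma5p6 (K : fieldType) (Q : quiver) (D : gpg Q)
    (al be : arr Q) (v1 v2 : vert Q) (mu : K) :
  is_gpg D -> is_acyclic_kronecker D al be v1 v2 -> mu != 0%R ->
  forall i : vert Q, i != v1 -> i != v2 ->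
    hom_acyclic (gdeg D) (gpg_rels D K) (twP K i) (kron_B D al be v1 v2 mu) /\
    hom_acyclic (gdeg D) (gpg_rels D K) (kron_B D al be v1 v2 mu) (twP K i).
Proof.
move=> gentleD kronD mu_neq0 i n1 n2; split.
- exact: hom_acyclic_P_B.
- exact: hom_acyclic_B_P.
Qed.
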